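(* Let $A$ be a unital ring and $p\in A$ a full idempotent, and suppose $\sum_{i=1}^n a_ipb_i=1$ for some $a_1,\dots,a_n,b_1,\dots,b_n\in A$. Then $\operatorname{sr}(pAp)\le n\cdot\operatorname{sr}(A)-n+1$.
   Context: An idempotent $p$ in a unital ring $A$ is full if $ApA=A$. A row $(a_1,\dots,a_n)\in A^n$ is right unimodular if $\sum_{i=1}^n a_iA=A$. A row $(a_1,\dots,a_n,b)\in A^{n+1}$ is reducible if there exist $c_1,\dots,c_n\in A$ such that $(a_1+bc_1,\dots,a_n+bc_n)$ is right unimodular. The (Bass) stable rank $\operatorname{sr}(A)$ is the least positive integer $n$ such that every right unimodular row in $A^{n+1}$ is reducible, or $\infty$ if no such $n$ exists (with the convention that the inequality is trivial if $\operatorname{sr}(A)=\infty$). *)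

From HB Require Import structures.
From mathcomp Require Import all_boot all_order all_algebra.
Set Implicit Arguments. Unset Strict Implicit. Unset Printing Implicit Defensive.
Import GRing.Theory.
Local Open Scope ring_scope.

Definition right_unimodular (R : pzRingType) (k : nat) (a : 'I_k -> R) : Prop :=
  exists c : 'I_k -> R, \sum_(i < k) a i * c i = 1.

Definition reducible (R : pzRingType) (m : nat) (v : 'I_m.+1 -> R) : Prop :=
  exists c : 'I_m -> R,
    right_unimodular (fun i : 'I_m => v (widen_ord (leqnSn m) i) + v ord_max * c i).

Definition bass_cond (R : pzRingType) (m : nat) : Prop :=
  forall v : 'I_m.+1 -> R, right_unimodular v -> reducible v.

Definition stable_rank_eq (R : pzRingType) (s : nat) : Prop :=
  [/\ (0 < s)%N, bass_cond R s & forall m, (0 < m < s)%N -> ~ bass_cond R m].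

Definition stable_rank_le (R : pzRingType) (k : nat) : Prop :=
  exists m, [/\ (0 < m)%N, (m <= k)%N & bass_cond R m].

Definition full_idem (A : pzRingType) (p : A) : Prop :=
  p * p = p /\
  forall x : A, exists k (u v : 'I_k -> A), x = \sum_(i < k) u i * p * v i.

Record idem (A : pzRingType) := Idem { idem_val :> A; idem_valP : idem_val * idem_val == idem_val }.

Section Corner.
Variables (A : pzRingType) (e : idem A).
Local Notation q := (idem_val e).

(* The corner ring pAp = { y in A | p y p = y } (= { p x p | x in A } as p is
   idempotent), with the operations of A and unit p. *)
Record corner := Corner { cval : A; cvalP : q * cval * q == cval }.

HB.instance Definition _ := [isSub for cval].
HB.instance Definition _ := [Choice of corner by <:].

Let ee : q * q = q. Proof. exact/eqP/idem_valP. Qed.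
Let cE (x : corner) : q * cval x * q = cval x. Proof. exact/eqP/cvalP. Qed.

Let cL (x : corner) : q * cval x = cval x.
Proof. by rewrite -[in LHS](cE x) !mulrA ee. Qed.
Let cR (x : corner) : cval x * q = cval x.
Proof. by rewrite -[in LHS](cE x) -!mulrA ee mulrA. Qed.

Lemma corner0_subproof : q * 0 * q == 0.
Proof. by rewrite mulr0 mul0r. Qed.
Definition czero := Corner corner0_subproof.

Lemma cornerN_subproof (x : corner) : q * (- cval x) * q == - cval x.
Proof. by rewrite mulrN mulNr cE. Qed.
Definition copp (x : corner) := Corner (cornerN_subproof x).

Lemma cornerD_subproof (x y : corner) : q * (cval x + cval y) * q == cval x + cval y.
Proof. by rewrite mulrDr mulrDl !cE. Qed.
Definition cadd (x y : corner) := Corner (cornerD_subproof x y).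

Lemma cornerM_subproof (x y : corner) : q * (cval x * cval y) * q == cval x * cval y.
Proof. by rewrite mulrA cL -mulrA cR. Qed.
Definition cmul (x y : corner) := Corner (cornerM_subproof x y).

Lemma corner1_subproof : q * q * q == q.
Proof. by rewrite !ee. Qed.
Definition cone := Corner corner1_subproof.

Lemma caddA : associative cadd.
Proof. by move=> x y z; apply: val_inj; rewrite /= addrA. Qed.
Lemma caddC : commutative cadd.
Proof. by move=> x y; apply: val_inj; rewrite /= addrC. Qed.
Lemma cadd0 : left_id czero cadd.
Proof. by move=> x; apply: val_inj; rewrite /= add0r. Qed.
Lemma caddN : left_inverse czero copp cadd.
Proof. by move=> x; apply: val_inj; rewrite /= addNr. Qed.

HB.instance Definition _ := GRing.isZmodule.Build corner caddA caddC cadd0 caddN.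

Lemma cmulA : associative cmul.
Proof. by move=> x y z; apply: val_inj; rewrite /= mulrA. Qed.
Lemma cmul1 : left_id cone cmul.
Proof. by move=> x; apply: val_inj; rewrite /= cL. Qed.
Lemma cmulr1 : right_id cone cmul.
Proof. by move=> x; apply: val_inj; rewrite /= cR. Qed.
Lemma cmulDl : left_distributive cmul cadd.
Proof. by move=> x y z; apply: val_inj; rewrite /= mulrDl. Qed.
Lemma cmulDr : right_distributive cmul cadd.
Proof. by move=> x y z; apply: val_inj; rewrite /= mulrDr. Qed.

HB.instance Definition _ := GRing.Zmodule_isPzRing.Build corner cmulA cmul1 cmulr1 cmulDl cmulDr.

End Corner.

From HB Require Import structures.
From mathcomp Require Import all_boot all_order all_algebra.
From mathcomp Require Import zify.
Set Implicit Arguments. Unset Strict Implicit. Unset Printing Implicit Defensive.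
Import GRing.Theory.
Local Open Scope ring_scope.

(* Write s = t + 1 and N = n t, and let (x_0, ..., x_N, x0) be a unimodular row over
   pAp, with coefficients (y_j, y0).  Group x_0, ..., x_(N-1) into t blocks of n
   entries and contract the k-th block against b to Z_k = sum_i x_(nk+i) b_i.  What
   this contraction loses of sum_i x_(nk+i) y_(nk+i) is a combination R_k of the same
   entries whose coefficients are annihilated by the row (a_i p), because
   sum_i a_i p b_i = 1.  Hence (Z_0, ..., Z_(t-1), x_N + 1 - p, x0 y0 + sum_k R_k) is a
   unimodular row of length t + 2 over A, which Bass' condition at s reduces.  Cutting
   the reduction down by p and expanding each Z_k back through a and b reduces the
   original row, so pAp satisfies Bass' condition at N + 1 = n s - n + 1. *)

Lemma sumr_ord_mul (V : nmodType) (n t : nat) (F : nat -> V) :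
  \sum_(j < n * t) F j = \sum_(k < t) \sum_(i < n) F (n * k + i)%N.
Proof.
elim: t => [|t IHt]; first by rewrite muln0 !big_ord0.
rewrite mulnSr big_split_ord /= IHt big_ord_recr /=.
by congr (_ + _); apply: eq_bigr => i _.
Qed.

Lemma block_indexE (n t k i : nat) : (k < t)%N -> (i < n)%N ->
  [/\ (n * k + i < n * t)%N, ((n * k + i) %/ n = k)%N & ((n * k + i) %% n = i)%N].
Proof.
move=> lt_kt lt_in; split.
- have : (n * k.+1 <= n * t)%N by rewrite leq_mul2l lt_kt orbT.
  rewrite mulnS; lia.
- by rewrite mulnC divnMDl ?(leq_ltn_trans _ lt_in) // divn_small // addn0.
- by rewrite mulnC modnMDl modn_small.
Qed.

Definition extn (V : zmodType) (n : nat) (f : 'I_n -> V) (i : nat) : V :=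
  oapp f 0 (insub i : option 'I_n).

Lemma extnE (V : zmodType) (n : nat) (f : 'I_n -> V) (i : 'I_n) : extn f i = f i.
Proof. by rewrite /extn valK. Qed.

Section Idempotent.
Variables (A : pzRingType) (p : A).
Hypothesis pp : p * p = p.

Lemma mul_onem_idem (z : A) : p * z = z -> (1 - p) * z = 0.
Proof. by move=> pz; rewrite mulrBl mul1r pz subrr. Qed.

Lemma onem_idem : (1 - p) * (1 - p) = 1 - p.
Proof. by rewrite [in LHS]mulrBr mulr1 mul_onem_idem // subr0. Qed.

Lemma mul_add_onem_idem (x y : A) :
  x * p = x -> (x + (1 - p)) * (p * y + (1 - p)) = x * y + (1 - p).
Proof.
move=> xp; rewrite mulrDl (mulrDr x) (mulrDr (1 - p)) mulrA xp mulrA.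
by rewrite mul_onem_idem // mul0r add0r onem_idem mulrBr mulr1 xp subrr addr0.
Qed.

(* Multiplying the relation by [1 - p] on the left and [p] on the right gives
   [(1 - p) d' p = 0], i.e. [d' p = p d' p]. *)
Lemma idem_cut (m : nat) (z d : 'I_m -> A) (z' d' : A) :
  (forall k, p * z k = z k) -> p * z' = z' ->
  \sum_(k < m) z k * d k + (z' + (1 - p)) * d' = 1 ->
  \sum_(k < m) z k * (d k * p) + z' * (p * d' * p) = p.
Proof.
move=> pz pz' rel.
have zd_killed : (1 - p) * (\sum_(k < m) z k * d k) = 0.
  by rewrite mulr_sumr big1 // => k _; rewrite mulrA mul_onem_idem ?mul0r.
have cut : (1 - p) * (d' * p) = 0.
  have := congr1 (fun w => (1 - p) * w * p) rel.
  rewrite /= mulrDr zd_killed add0r mulrA mulrDr mul_onem_idem // onem_idem add0r.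
  by rewrite mulr1 [(1 - p) * p]mul_onem_idem // -mulrA.
have -> : p * d' * p = d' * p.
  by move/eqP: cut; rewrite mulrBl mul1r subr_eq0 mulrA => /eqP.
have := congr1 (fun w => w * p) rel.
rewrite /= mul1r mulrDl mulr_suml (mulrDl z') mulrDl.
rewrite -[(1 - p) * d' * p]mulrA cut addr0 => rel_p.
rewrite -[RHS]rel_p; congr (_ + _); last exact: mulrA.
by apply: eq_bigr => k _; rewrite mulrA.
Qed.

End Idempotent.

Section Blocks.
Variables (A : pzRingType) (p : A) (n : nat) (a b : 'I_n -> A).
Hypotheses (pp : p * p = p) (hab : \sum_(i < n) a i * p * b i = 1).

Definition block_comb (x : 'I_n -> A) := \sum_(i < n) x i * b i.
Definition block_coef (y : 'I_n -> A) := \sum_(i < n) a i * p * y i.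
Definition block_corr (y : 'I_n -> A) (i : 'I_n) := p * (y i - b i * block_coef y).
Definition block_rem (x y : 'I_n -> A) := \sum_(i < n) x i * block_corr y i.

Lemma block_decomp (x y : 'I_n -> A) : (forall i, x i * p = x i) ->
  block_comb x * block_coef y + block_rem x y = \sum_(i < n) x i * y i.
Proof.
move=> xp; rewrite /block_rem /block_corr.
under eq_bigr do rewrite mulrA xp mulrBr mulrA.
by rewrite sumrB /block_comb mulr_suml addrC subrK.
Qed.

Lemma block_corr_annihilated (y : 'I_n -> A) :
  \sum_(i < n) a i * p * block_corr y i = 0.
Proof.
rewrite /block_corr; under eq_bigr do rewrite mulrA -(mulrA _ p p) pp mulrBr mulrA.
by rewrite sumrB -mulr_suml hab mul1r subrr.
Qed.

Lemma block_reduce (x y : 'I_n -> A) (e P D : A) : (forall i, x i * p = x i) ->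
  \sum_(i < n) (x i + e * a i * p) * (p * b i * P + block_corr y i * D)
  = block_comb x * P + block_rem x y * D + e * P.
Proof.
move=> xp.
have term i : (x i + e * a i * p) * (p * b i * P + block_corr y i * D) =
    x i * b i * P + x i * block_corr y i * D +
    (e * (a i * p * b i) * P + e * (a i * p * block_corr y i) * D).
  by rewrite mulrDl !mulrDr !mulrA xp -[_ * p * p]mulrA pp.
rewrite (eq_bigr _ (fun i _ => term i)) !big_split /= -!mulr_suml -!mulr_sumr.
by rewrite hab block_corr_annihilated mulr1 mulr0 mul0r addr0.
Qed.

End Blocks.

Section Lift.
Variables (A : pzRingType) (p : A) (n : nat) (a b : 'I_n -> A).
Hypotheses (pp : p * p = p) (hab : \sum_(i < n) a i * p * b i = 1).
Variables (t : nat) (x y : nat -> A) (x0 y0 : A).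
Hypotheses (xp : forall j, x j * p = x j) (px : forall j, p * x j = x j).
Hypotheses (x0p : x0 * p = x0) (px0 : p * x0 = x0).
Hypothesis unim : \sum_(j < (n * t).+1) x j * y j + x0 * y0 = p.

Local Notation N := (n * t)%N.

Definition block (f : nat -> A) (k : nat) (i : 'I_n) : A := f (n * k + i)%N.

Local Notation Z k := (block_comb b (block x k)).
Local Notation u k := (block_coef p a (block y k)).
Local Notation R k := (block_rem p a b (block x k) (block y k)).
Local Notation r := (\sum_(k < t) R k + x0 * y0).

Let xpb k i : block x k i * p = block x k i. Proof. exact: xp. Qed.

Definition lift_row (k : nat) : A :=
  if (k < t)%N then Z k else if k == t then x N + (1 - p) else r.

Lemma lift_row_unimodular : right_unimodular (fun k : 'I_t.+2 => lift_row k).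
Proof.
exists (fun k : 'I_t.+2 =>
  if (k < t)%N then u k else if k == t :> nat then p * y N + (1 - p) else 1).
rewrite 2!big_ord_recr /= /lift_row ltnn eqxx (leq_gtF (leqnSn t)).
rewrite (gtn_eqF (ltnSn t)) mulr1 mul_add_onem_idem //.
rewrite (eq_bigr (fun k : 'I_t => Z k * u k)); last by move=> k _; rewrite ltn_ord.
have blocks : \sum_(k < t) (Z k * u k + R k) = \sum_(j < N) x j * y j.
  rewrite (sumr_ord_mul _ _ (fun j => x j * y j)).
  by apply: eq_bigr => k _; rewrite block_decomp.
have := unim; rewrite big_ord_recr /= -blocks big_split /= => sum_p.
rewrite addrAC addrA.
have -> : \sum_(k < t) Z k * u k + r + x N * y N = p.
  by rewrite -[RHS]sum_p addrA [_ + x N * y N]addrAC.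
by rewrite addrC subrK.
Qed.

Lemma lift_reduction_relation : bass_cond A t.+1 ->
  exists C D : nat -> A,
    \sum_(k < t) (Z k + r * C k) * (D k * p) + (x N + r * C t) * (p * D t * p) = p.
Proof.
move=> bassA; have [c [d rel]] := bassA _ lift_row_unimodular.
exists (extn c), (extn d).
have lift_last : lift_row t.+1 = r.
  by rewrite /lift_row ltnNge leqnSn (gtn_eqF (ltnSn t)).
have pr : p * r = r.
  rewrite mulrDr mulrA px0 mulr_sumr; congr (_ + _); apply: eq_bigr => k _.
  by rewrite /block_rem mulr_sumr; apply: eq_bigr => i _; rewrite mulrA px.
have pzr z k : p * z = z -> p * (z + r * extn c k) = z + r * extn c k.
  by move=> pz; rewrite mulrDr pz mulrA pr.
have pZ k : p * Z k = Z k.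
  by rewrite /block_comb mulr_sumr; apply: eq_bigr => i _; rewrite mulrA px.
apply: (idem_cut pp (fun k : 'I_t => pzr _ k (pZ k)) (pzr _ t (px N))).
rewrite -[RHS]rel big_ord_recr /= lift_last; congr (_ + _).
  by apply: eq_bigr => k _; rewrite /lift_row ltn_ord -(extnE c) -(extnE d).
by rewrite /lift_row ltnn eqxx -(extnE c) -(extnE d) addrAC.
Qed.

Section Witness.
Variables (C P : nat -> A) (Pt : A).
Hypothesis pPt : p * Pt = Pt.

Let Dsum := \sum_(k < t) C k * P k + C t * Pt.

(* The reduction [(C, P)] of the lifted row, pulled back through [a] and [b]. *)
Definition lift_coef (j : nat) : A :=
  if (j < N)%N then y0 * C (j %/ n)%N * extn a (j %% n)%N else y0 * C t.

Definition lift_weight (j : nat) : A :=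
  if (j < N)%N then
    p * extn b (j %% n)%N * P (j %/ n)%N +
    extn (block_corr p a b (block y (j %/ n)%N)) (j %% n)%N * Dsum
  else Pt.

Lemma lift_witness_sum :
  \sum_(j < N.+1) (x j + x0 * (p * lift_coef j * p)) * lift_weight j
  = \sum_(k < t) (Z k + r * C k) * P k + (x N + r * C t) * Pt.
Proof.
pose F j := (x j + x0 * (p * lift_coef j * p)) * lift_weight j.
have blockF (k : 'I_t) :
    \sum_(i < n) F (n * k + i)%N = Z k * P k + R k * Dsum + x0 * y0 * C k * P k.
  rewrite -(block_reduce pp hab _ _ _ _ (xpb k)); apply: eq_bigr => i _.
  have [lt_j div_j mod_j] := block_indexE (ltn_ord k) (ltn_ord i).
  rewrite /F /lift_coef /lift_weight lt_j div_j mod_j !extnE.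
  by congr ((_ + _) * _); rewrite !mulrA x0p.
have lastF : F N = x N * Pt + x0 * y0 * C t * Pt.
  by rewrite /F /lift_coef /lift_weight ltnn mulrDl !mulrA x0p -[_ * p * Pt]mulrA pPt.
transitivity (\sum_(j < N.+1) F j); first by [].
rewrite big_ord_recr /= (sumr_ord_mul _ _ F) (eq_bigr _ (fun k _ => blockF k)) lastF.
have -> : \sum_(k < t) (Z k + r * C k) * P k + (x N + r * C t) * Pt
    = \sum_(k < t) Z k * P k + x N * Pt + r * Dsum.
  under eq_bigr do rewrite mulrDl -[r * C _ * _]mulrA.
  rewrite big_split /= -mulr_sumr (mulrDl (x N)) -[r * C t * Pt]mulrA.
  by rewrite addrACA -mulrDr.
under eq_bigr do rewrite -[x0 * y0 * _ * _]mulrA.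
rewrite !big_split /= -mulr_suml -mulr_sumr -[x0 * y0 * C t * Pt]mulrA mulrDl.
rewrite -!addrA; congr (_ + _); rewrite [RHS]addrCA; congr (_ + _).
by rewrite addrCA -mulrDr.
Qed.

End Witness.

Lemma lift_reduction : bass_cond A t.+1 ->
  exists c w : nat -> A, \sum_(j < N.+1) (x j + x0 * (p * c j * p)) * w j = p.
Proof.
move=> bassA; have [C [D rel]] := lift_reduction_relation bassA.
have pPt : p * (p * D t * p) = p * D t * p by rewrite !mulrA pp.
exists (lift_coef C), (lift_weight C (fun k => D k * p) (p * D t * p)).
by rewrite (lift_witness_sum _ _ pPt); exact: rel.
Qed.

End Lift.

Section CornerRows.
Variables (A : pzRingType) (e : idem A).
Local Notation p := (idem_val e).

Lemma idem_valK : p * p = p.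
Proof. exact/eqP/idem_valP. Qed.

Lemma cval_sum (k : nat) (F : 'I_k -> corner e) :
  cval (\sum_(i < k) F i) = \sum_(i < k) cval (F i).
Proof. by apply: big_morph. Qed.

Lemma cval_mull (z : corner e) : p * cval z = cval z.
Proof. by rewrite -{1}(eqP (cvalP z)) !mulrA idem_valK (eqP (cvalP z)). Qed.

Lemma cval_mulr (z : corner e) : cval z * p = cval z.
Proof. by rewrite -{1}(eqP (cvalP z)) -mulrA idem_valK (eqP (cvalP z)). Qed.

Lemma to_corner_subproof (z : A) : p * (p * z * p) * p == p * z * p.
Proof. by rewrite !mulrA idem_valK -!mulrA idem_valK. Qed.

Definition to_corner (z : A) : corner e := Corner (to_corner_subproof z).

Lemma corner_unimodular (m : nat) (v : 'I_m -> corner e) (w : 'I_m -> A) :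
  \sum_(i < m) cval (v i) * w i = p -> right_unimodular v.
Proof.
move=> vw; exists (fun i => to_corner (w i)); apply: val_inj.
rewrite /= cval_sum -[RHS]idem_valK -{1}vw mulr_suml.
by apply: eq_bigr => i _; rewrite /= !mulrA cval_mulr.
Qed.

Lemma bass_corner (n : nat) (a b : 'I_n -> A) (t : nat) :
  \sum_(i < n) a i * p * b i = 1 -> bass_cond A t.+1 ->
  bass_cond (corner e) (n * t).+1.
Proof.
move=> hab bassA v [cv hv].
pose x j := cval (extn v j); pose y j := cval (extn cv j).
have unim : \sum_(j < (n * t).+1) x j * y j
    + cval (v ord_max) * cval (cv ord_max) = p.
  rewrite -[RHS]/(cval 1) -hv cval_sum [RHS]big_ord_recr /=; congr (_ + _).
  by apply: eq_bigr => j _; rewrite /x /y -(extnE v) -(extnE cv).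
have [c [w cw]] := lift_reduction idem_valK hab (fun j => cval_mulr (extn v j))
  (fun j => cval_mull (extn v j)) (cval_mulr _) (cval_mull _) unim bassA.
exists (fun i => to_corner (c i)); apply: (corner_unimodular (w := fun i => w i)).
by rewrite -[RHS]cw; apply: eq_bigr => i _; rewrite /x -(extnE v).
Qed.

End CornerRows.

Theorem theorem8 (A : pzRingType) (p : idem A) (n : nat) (a b : 'I_n -> A) :
  full_idem (idem_val p) ->
  \sum_(i < n) a i * (idem_val p) * b i = 1 ->
  forall s : nat, stable_rank_eq A s ->
  stable_rank_le (corner p) (n * s - n + 1).
Proof.
(* Fullness of [p] is only used through the relation [sum_i a_i p b_i = 1]. *)
move=> _ hab [|t] [//= _ bassA _].
exists (n * t).+1; split => //; first by rewrite mulnSr addnK addn1.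
exact: bass_corner hab bassA.
Qed.
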